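(* Let $a\in\mathbb{C}$ with $2a\notin\{0,-1,-2,\ldots\}$. Then \[ {}_5F_4\!\left(\left.{1,\,1,\,1-2a,\,\frac{7+3a\pm\sqrt{9a^2+2a-1}}{5}\atop \frac32,\,1+2a,\,\frac{2+3a\pm\sqrt{9a^2+2a-1}}{5}}\right|-\frac14\right)=\frac{4a}{1+2a}. \]
   Context: ${}_pF_q\left(\left.{a_1,\ldots,a_p\atop b_1,\ldots,b_q}\right|z\right)=\sum_{n\ge0}\frac{(a_1)_n\cdots(a_p)_n}{(b_1)_n\cdots(b_q)_n}\frac{z^n}{n!}$ with $(x)_n=x(x+1)\cdots(x+n-1)$. A parameter written with $\pm$ stands for the two parameters obtained with $+$ and with $-$. *)

From Stdlib Require Import Reals List Arith.
From Coquelicot Require Import Coquelicot.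
Open Scope C_scope.

Fixpoint poch (x : C) (n : nat) : C :=
  match n with
  | O => 1
  | S k => poch x k * (x + RtoC (INR k))
  end.

Definition prodC (l : list C) : C := fold_right Cmult 1 l.

Definition hyp_term (as_ bs : list C) (z : C) (n : nat) : C :=
  prodC (map (fun a => poch a n) as_) / prodC (map (fun b => poch b n) bs)
  * Cpow z n / RtoC (INR (Factorial.fact n)).

Definition hyp_sum (as_ bs : list C) (z l : C) : Prop :=
  @is_series _ C_NormedModule (hyp_term as_ bs z) l.

(* The sum telescopes.  With t_n the n-th term of the 3F2 series with
   parameters (1, 1, 1-2a; 3/2, 1+2a; -1/4), the pair of parameters
   (u+1)/u, (v+1)/v of the 5F4 series multiplies t_n by (u+n)(v+n)/(uv)
   = q(n)/(1+2a), where q(n) = 5n^2 + (4+6a)n + 1 + 2a; and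
   G(n) = 2(2n+1)(n+2a) t_n satisfies G(n) - G(n+1) = t_n q(n).  Hence the
   N-th partial sum is (G(0) - G(N+1))/(1+2a), with G(0) = 4a, and G(n) -> 0
   because |G(n+1)/G(n)| -> 1/4. *)

From Stdlib Require Import Reals List Lra Lia.
From Coquelicot Require Import Coquelicot.
Import ListNotations.
Open Scope C_scope.

Lemma sum_n_telescoping (g : nat -> C) (N : nat) :
  sum_n (fun n => g n - g (S n)) N = g O - g (S N).
Proof.
  induction N as [|N IH].
  - now rewrite sum_O.
  - rewrite sum_Sn, IH.
    change (g O - g (S N) + (g (S N) - g (S (S N))) = g O - g (S (S N))).
    ring.
Qed.

Lemma is_series_telescoping (g : nat -> C) :
  is_lim_seq (fun n => Cmod (g n)) 0%R ->
  is_series (fun n => g n - g (S n)) (g O).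
Proof.
  intros Hg.
  assert (HgS : filterlim (fun n => g (S n)) eventually (locally (zero : C))).
  { apply (@filterlim_norm_zero _ C_AbsRing C_NormedModule).
    - apply eventually_filter.
    - now apply is_lim_seq_incr_1 in Hg. }
  unfold is_series.
  apply filterlim_ext with (fun N => plus (g O) (opp (g (S N)))).
  { intros N. now rewrite sum_n_telescoping. }
  enough (H : filterlim (fun N => plus (g O) (opp (g (S N)))) eventually
                (locally (plus (g O) (opp (zero : C))))).
  { replace (plus (g O) (opp (zero : C))) with (g O) in H; [exact H|].
    change (g O = g O + - 0). ring. }
  eapply filterlim_comp_2;
    [apply filterlim_const | | apply (@filterlim_plus C_AbsRing C_NormedModule)].
  eapply filterlim_comp;
    [exact HgS | apply (@filterlim_opp C_AbsRing C_NormedModule)].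
Qed.

Lemma is_lim_seq_ratio_bound (u : nat -> R) (q : R) (N : nat) :
  (0 <= q < 1)%R -> (forall n, 0 <= u n)%R ->
  (forall n, (N <= n)%nat -> u (S n) <= q * u n)%R ->
  is_lim_seq u 0%R.
Proof.
  intros Hq Hu Hratio.
  apply (is_lim_seq_incr_n _ N).
  assert (Hgeom : forall k, (u (k + N)%nat <= q ^ k * u N)%R).
  { induction k as [|k IH]; simpl; [lra|].
    apply Rle_trans with (q * u (k + N)%nat)%R.
    - apply Hratio. lia.
    - rewrite Rmult_assoc. apply Rmult_le_compat_l; lra. }
  apply is_lim_seq_le_le with (fun _ => 0%R) (fun k => (q ^ k * u N)%R).
  - intros k. split; [apply Hu | apply Hgeom].
  - apply is_lim_seq_const.
  - replace (Finite 0) with (Rbar_mult 0 (u N)) by (simpl; f_equal; ring).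
    apply is_lim_seq_scal_r, is_lim_seq_geom.
    rewrite Rabs_pos_eq; lra.
Qed.

Definition not_nonpos_int (x : C) : Prop := forall m : nat, x <> - RtoC (INR m).

Lemma not_nonpos_int_of_Re_pos (x : C) : (0 < Re x)%R -> not_nonpos_int x.
Proof.
  intros Hx m E. apply (f_equal Re) in E. simpl in E.
  pose proof (pos_INR m). lra.
Qed.

Lemma not_nonpos_int_add_INR_neq0 (x : C) (n : nat) :
  not_nonpos_int x -> x + RtoC (INR n) <> 0.
Proof. intros Hx E. apply (Hx n). rewrite <- (Cplus_0_l (- _)), <- E. ring. Qed.

Lemma not_nonpos_int_neq0 (x : C) : not_nonpos_int x -> x <> 0.
Proof.
  intros Hx. replace x with (x + RtoC (INR 0)) by (simpl; ring).
  now apply not_nonpos_int_add_INR_neq0.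
Qed.

Lemma poch_neq0 (x : C) (n : nat) : not_nonpos_int x -> poch x n <> 0.
Proof.
  intros Hx. induction n as [|n IH]; simpl poch.
  - intros E. injection E. lra.
  - apply Cmult_neq_0; [exact IH | now apply not_nonpos_int_add_INR_neq0].
Qed.

Lemma poch_add1_mul (x : C) (n : nat) :
  poch (x + 1) n * x = poch x n * (x + RtoC (INR n)).
Proof.
  induction n as [|n IH]; simpl poch.
  - simpl INR. ring.
  - rewrite S_INR, RtoC_plus.
    transitivity (poch (x + 1) n * x * (x + 1 + INR n)); [ring|].
    rewrite IH. ring.
Qed.

Lemma poch_add1 (x : C) (n : nat) :
  x <> 0 -> poch (x + 1) n = poch x n * (x + RtoC (INR n)) / x.
Proof. intros Hx. rewrite <- poch_add1_mul. field. exact Hx. Qed.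

Lemma poch_1 (n : nat) : poch 1 n = RtoC (INR (Factorial.fact n)).
Proof.
  induction n as [|n IH]; simpl poch; [reflexivity|].
  rewrite IH. change (Factorial.fact (S n)) with (S n * Factorial.fact n)%nat.
  rewrite mult_INR, S_INR, !RtoC_mult, RtoC_plus. ring.
Qed.

Lemma not_nonpos_int_1 : not_nonpos_int 1.
Proof. apply not_nonpos_int_of_Re_pos. simpl. lra. Qed.

Lemma not_nonpos_int_3_2 : not_nonpos_int (3 / 2).
Proof.
  apply not_nonpos_int_of_Re_pos. simpl. field_simplify; lra.
Qed.

Definition base_term (a : C) (n : nat) : C :=
  poch 1 n * poch (1 - 2 * a) n / (poch (3 / 2) n * poch (1 + 2 * a) n)
  * Cpow (- (1 / 4)) n.

Definition telescoper (a : C) (n : nat) : C :=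
  RtoC (2 * (2 * INR n + 1)) * (RtoC (INR n) + 2 * a) * base_term a n.

Definition shift_quadratic (a : C) (n : nat) : C :=
  5 * RtoC (INR n) * RtoC (INR n) + (4 + 6 * a) * RtoC (INR n) + 1 + 2 * a.

Section Telescoper.

Variable a : C.
Hypothesis h2a : not_nonpos_int (1 + 2 * a).

Lemma base_term_S (n : nat) :
  base_term a (S n) = base_term a n * (- (1 / 4))
    * ((1 + RtoC (INR n)) * (1 - 2 * a + RtoC (INR n))
       / ((3 / 2 + RtoC (INR n)) * (1 + 2 * a + RtoC (INR n)))).
Proof.
  unfold base_term. simpl poch. simpl Cpow.
  pose proof (poch_neq0 _ n not_nonpos_int_3_2).
  pose proof (poch_neq0 _ n h2a).
  pose proof (not_nonpos_int_add_INR_neq0 _ n not_nonpos_int_3_2).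
  pose proof (not_nonpos_int_add_INR_neq0 _ n h2a).
  field. repeat split; auto.
  intros E. apply (f_equal Re) in E. simpl in E. pose proof (pos_INR n). lra.
Qed.

Ltac telescoper_field n :=
  unfold telescoper, shift_quadratic; rewrite base_term_S, S_INR;
  pose proof (not_nonpos_int_add_INR_neq0 _ n not_nonpos_int_3_2);
  pose proof (not_nonpos_int_add_INR_neq0 _ n h2a);
  repeat rewrite ?RtoC_mult, ?RtoC_plus;
  field; split; auto;
  intros E; apply (f_equal Re) in E; simpl in E; pose proof (pos_INR n); lra.

Lemma telescoper_sub_S (n : nat) :
  telescoper a n - telescoper a (S n) = base_term a n * shift_quadratic a n.
Proof. telescoper_field n. Qed.

Lemma telescoper_S (n : nat) :
  telescoper a (S n) * (RtoC (2 * (2 * INR n + 1)) * (RtoC (INR n) + 2 * a))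
  = - telescoper a n * ((RtoC (INR n) + 1) * (RtoC (INR n) + 1 - 2 * a)).
Proof. telescoper_field n. Qed.

Lemma telescoper_0 : telescoper a 0 = 4 * a.
Proof.
  unfold telescoper, base_term. simpl.
  replace (2 * (2 * 0 + 1))%R with 2%R by ring. field.
Qed.

Lemma contraction_ineq (x A : R) :
  (0 <= A)%R -> (2 + 5 * A <= x)%R ->
  ((x + 1) * (x + 1 + A) <= 3 / 4 * (2 * (2 * x + 1)) * (x - A))%R.
Proof. intros. nra. Qed.

Lemma telescoper_contracts (n : nat) : (2 + 5 * Cmod (2 * a) <= INR n)%R ->
  (Cmod (telescoper a (S n)) <= 3 / 4 * Cmod (telescoper a n))%R.
Proof.
  intros Hn.
  pose proof (f_equal Cmod (telescoper_S n)) as E.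
  rewrite !Cmod_mult, Cmod_opp in E.
  set (A := Cmod (2 * a)) in *.
  assert (HA : (0 <= A)%R) by apply Cmod_ge_0.
  pose proof (pos_INR n).
  assert (Hlin : Cmod (RtoC (2 * (2 * INR n + 1))) = (2 * (2 * INR n + 1))%R).
  { rewrite Cmod_R, Rabs_pos_eq; lra. }
  assert (Hsucc : Cmod (RtoC (INR n) + 1) = (INR n + 1)%R).
  { rewrite <- RtoC_plus, Cmod_R, Rabs_pos_eq; lra. }
  assert (Hlow : (INR n - A <= Cmod (RtoC (INR n) + 2 * a))%R).
  { pose proof (Cmod_triangle (RtoC (INR n) + 2 * a) (- (2 * a))) as Htri.
    replace (RtoC (INR n) + 2 * a + - (2 * a)) with (RtoC (INR n)) in Htri by ring.
    rewrite Cmod_opp, Cmod_R, Rabs_pos_eq in Htri; fold A in Htri; lra. }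
  assert (Hup : (Cmod (RtoC (INR n) + 1 - 2 * a) <= INR n + 1 + A)%R).
  { pose proof (Cmod_triangle (RtoC (INR n) + 1) (- (2 * a))) as Htri.
    now rewrite Cmod_opp, Hsucc in Htri. }
  rewrite Hlin, Hsucc in E.
  assert (Hfactors : ((INR n + 1) * Cmod (RtoC (INR n) + 1 - 2 * a)
     <= 3 / 4 * (2 * (2 * INR n + 1)) * Cmod (RtoC (INR n) + 2 * a))%R).
  { apply Rle_trans with ((INR n + 1) * (INR n + 1 + A))%R;
      [apply Rmult_le_compat_l; lra|].
    apply Rle_trans with (3 / 4 * (2 * (2 * INR n + 1)) * (INR n - A))%R;
      [now apply contraction_ineq | apply Rmult_le_compat_l; lra]. }
  pose proof (Cmod_ge_0 (telescoper a n)).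
  apply Rmult_le_reg_r with (2 * (2 * INR n + 1) * Cmod (RtoC (INR n) + 2 * a))%R;
    [nra|].
  rewrite E. nra.
Qed.

Lemma telescoper_lim : is_lim_seq (fun n => Cmod (telescoper a n)) 0%R.
Proof.
  destruct (INR_unbounded (2 + 5 * Cmod (2 * a))) as [N HN].
  apply (is_lim_seq_ratio_bound _ (3 / 4) N); [lra | intros; apply Cmod_ge_0 |].
  intros n Hn. apply telescoper_contracts.
  apply le_INR in Hn. lra.
Qed.

End Telescoper.

Section ShiftedPair.

Variables a u v : C.
Hypothesis h2a : not_nonpos_int (1 + 2 * a).
Hypothesis hu : not_nonpos_int u.
Hypothesis hv : not_nonpos_int v.
Hypothesis huv : u * v = (1 + 2 * a) / 5.
Hypothesis hupv : u + v = (4 + 6 * a) / 5.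

Lemma poch_add1_pair (n : nat) :
  poch (u + 1) n * poch (v + 1) n
  = poch u n * poch v n * (shift_quadratic a n / (1 + 2 * a)).
Proof.
  pose proof (not_nonpos_int_neq0 _ hu).
  pose proof (not_nonpos_int_neq0 _ hv).
  pose proof (not_nonpos_int_neq0 _ h2a).
  assert (Hq : (u + RtoC (INR n)) * (v + RtoC (INR n))
               = shift_quadratic a n / 5).
  { replace ((u + RtoC (INR n)) * (v + RtoC (INR n)))
      with (u * v + (u + v) * RtoC (INR n) + RtoC (INR n) * RtoC (INR n)) by ring.
    rewrite huv, hupv. unfold shift_quadratic. field. }
  rewrite !poch_add1 by assumption.
  transitivity (poch u n * poch v n
                * ((u + RtoC (INR n)) * (v + RtoC (INR n)) / (u * v)));
    [field; auto|].
  rewrite Hq, huv. field. auto.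
Qed.

Lemma hyp_term_shifted_pair (n : nat) :
  hyp_term [(1 : C); (1 : C); 1 - 2 * a; u + 1; v + 1] [(3 / 2 : C); 1 + 2 * a; u; v] (- (1 / 4)) n
  = / (1 + 2 * a) * (telescoper a n - telescoper a (S n)).
Proof.
  rewrite telescoper_sub_S by exact h2a.
  unfold hyp_term. simpl.
  replace (poch (u + 1) n * (poch (v + 1) n * 1))
    with (poch u n * poch v n * (shift_quadratic a n / (1 + 2 * a)))
    by (rewrite <- poch_add1_pair; ring).
  rewrite <- poch_1.
  pose proof (poch_neq0 _ n hu). pose proof (poch_neq0 _ n hv).
  pose proof (poch_neq0 _ n h2a). pose proof (poch_neq0 _ n not_nonpos_int_3_2).
  pose proof (poch_neq0 _ n not_nonpos_int_1). pose proof (not_nonpos_int_neq0 _ h2a).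
  unfold base_term. field. repeat split; auto.
Qed.

Lemma hyp_sum_shifted_pair :
  hyp_sum [(1 : C); (1 : C); 1 - 2 * a; u + 1; v + 1] [(3 / 2 : C); 1 + 2 * a; u; v] (- (1 / 4))
    (4 * a / (1 + 2 * a)).
Proof.
  unfold hyp_sum.
  apply is_series_ext with (fun n => scal (/ (1 + 2 * a))
                                      (telescoper a n - telescoper a (S n))).
  { intros n. symmetry. apply hyp_term_shifted_pair. }
  replace (4 * a / (1 + 2 * a)) with (scal (/ (1 + 2 * a)) (telescoper a 0))
    by (rewrite telescoper_0; change (/ (1 + 2 * a) * (4 * a) = 4 * a / (1 + 2 * a)); field;
        now apply not_nonpos_int_neq0).
  apply (@is_series_scal C_AbsRing C_NormedModule), is_series_telescoping, telescoper_lim, h2a.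
Qed.

End ShiftedPair.

Theorem corollary10 (a s : C)
  (ha : forall m : nat, 2 * a <> - RtoC (INR m))
  (hs : s * s = 9 * a * a + 2 * a - 1)
  (hb : forall m : nat,
      (2 + 3 * a + s) / 5 <> - RtoC (INR m) /\
      (2 + 3 * a - s) / 5 <> - RtoC (INR m)) :
  hyp_sum
    [(1:C); (1:C); 1 - 2 * a; (7 + 3 * a + s) / 5; (7 + 3 * a - s) / 5]
    [(3 / 2 : C); 1 + 2 * a; (2 + 3 * a + s) / 5; (2 + 3 * a - s) / 5]
    (- (1 / 4))
    (4 * a / (1 + 2 * a)).
Proof.
  assert (H5 : (5 : C) <> 0).
  { intros E. apply (f_equal Re) in E. simpl in E. lra. }
  replace ((7 + 3 * a + s) / 5) with ((2 + 3 * a + s) / 5 + 1) by (field; auto).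
  replace ((7 + 3 * a - s) / 5) with ((2 + 3 * a - s) / 5 + 1) by (field; auto).
  apply hyp_sum_shifted_pair.
  - intros m E. apply (ha (S m)). rewrite S_INR, RtoC_plus.
    replace (2 * a) with ((1 + 2 * a) - 1) by ring. rewrite E. ring.
  - intros m. apply (proj1 (hb m)).
  - intros m. apply (proj2 (hb m)).
  - transitivity (((2 + 3 * a) * (2 + 3 * a) - s * s) / 25); [field; auto|].
    rewrite hs. field; auto.
  - field; auto.
Qed.
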